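(* Let $P$ be a positive, completely labelled causal logic program and $\pi(p)$ a proof of atom $p$ with respect to $P$. Then $\mathrm{graph}(\pi(p))\in T_P\!\uparrow\!h(p)$, where $h=\mathrm{height}(\pi(p))$.
   Context: Causal graphs: reflexively–transitively closed directed graphs on labels; $G\le G'$ iff $G\supseteq G'$; $G*G'=(G\cup G')^*$, $G\cdot G'$ the closure of the graph with vertices $V\cup V'$ and edges $E\cup E'\cup(V\times V')$. Causal values: down-sets of causal graphs; $*$ intersection, $+$ union, $U\cdot U'={\downarrow}\{G\cdot G'\}$; label $l$ denotes ${\downarrow}$ of the graph with only edge $(l,l)$. Positive completely labelled program: rules $l:H\leftarrow B_1,\dots,B_n$ with atoms $B_i$, every rule labelled, labels pairwise distinct. $T_P(I)(p)=\sum\{(I(B_1)*\dots*I(B_n))\cdot t\mid(t:p\leftarrow B_1,\dots,B_n)\in P\}$; $T_P\!\uparrow\!0=$ all atoms $0$, $T_P\!\uparrow\!(k+1)=T_P(T_P\!\uparrow\!k)$. A proof of $p$ is a derivation tree $\frac{\pi(B_1)\cdots\pi(B_n)}{p}(R)$ with $R\in P$ of head $p$ and body $\{B_1,\dots,B_n\}$ (antecedent $\top$ if $n=0$). $\mathrm{graph}(\pi)$ is the reflexive–transitive closure of the graph whose vertices are the labels of all rules used in $\pi$ and which has, for each sub-derivation using a rule labelled $m$ with immediate subproofs whose last rules are labelled $l_i$, the edges $(l_i,m)$. $\mathrm{height}(\pi)=1+\max\{\mathrm{height}(\pi')\mid\pi'\text{ an immediate subproof of }\pi\}$, with height $1$ when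 the antecedent is $\top$. *)

From Stdlib Require Import List Relations Arith.
Import ListNotations.
Set Implicit Arguments.

Section Causal.
Variables (L : Type) (A : Type).

(* A graph on labels is given by its edge relation; its vertices are the
   labels carrying a self-loop (causal graphs are reflexively closed). *)
Definition graph := L -> L -> Prop.

Definition star (V : L -> Prop) (E : L -> L -> Prop) : graph :=
  fun x y => (x = y /\ V x) \/ clos_trans L E x y.

Definition cgraph (G : graph) : Prop :=
  (forall x y, G x y -> G x x /\ G y y) /\
  (forall x y z, G x y -> G y z -> G x z).

Definition verts (G : graph) : L -> Prop := fun x => G x x.

(* G <= G'  iff  G is a superset of G' *)
Definition gle (G G' : graph) : Prop := forall x y, G' x y -> G x y.

Definition gprod (G G' : graph) : graph :=
  star (fun x => verts G x \/ verts G' x) (fun x y => G x y \/ G' x y).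

Definition gdot (G G' : graph) : graph :=
  star (fun x => verts G x \/ verts G' x)
       (fun x y => G x y \/ G' x y \/ (verts G x /\ verts G' y)).

Definition glab (l : L) : graph := fun x y => x = l /\ y = l.

(* causal values: down-sets of causal graphs, represented as predicates *)
Definition value := graph -> Prop.

Definition downset (U : value) : Prop :=
  (forall G, U G -> cgraph G) /\
  (forall G G', U G' -> cgraph G -> gle G G' -> U G).

Definition down (S : value) : value :=
  fun G => cgraph G /\ exists G', S G' /\ gle G G'.

Definition vzero : value := fun _ => False.
(* 1 = down-set of the empty graph = all causal graphs *)
Definition vone : value := down (fun G => forall x y, ~ G x y).
Definition vlab (l : L) : value := down (fun G => forall x y, G x y <-> glab l x y).
Definition vsum (U U' : value) : value := fun G => U G \/ U' G.
Definition vprod (U U' : value) : value := fun G => U G /\ U' G.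
Definition vdot (U U' : value) : value :=
  down (fun G => exists G1 G2, U G1 /\ U' G2 /\ forall x y, G x y <-> gdot G1 G2 x y).

Record rule := Rule { rlab : L; rhead : A; rbody : list A }.

Definition program := rule -> Prop.

(* completely labelled: every rule labelled (built in), labels pairwise distinct *)
Definition labels_distinct (P : program) : Prop :=
  forall r r', P r -> P r' -> rlab r = rlab r' -> r = r'.

Definition interp := A -> value.

Definition body_val (I : interp) (bs : list A) : value :=
  fold_right (fun b U => vprod (I b) U) vone bs.

Definition TP (P : program) (I : interp) : interp :=
  fun p G => exists r, P r /\ rhead r = p /\ vdot (body_val I (rbody r)) (vlab (rlab r)) G.

Definition TP_iter (P : program) (k : nat) : interp :=
  Nat.iter k (TP P) (fun _ => vzero).

Inductive proof := Node : rule -> list proof -> proof.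

Definition root (pi : proof) : rule := match pi with Node r _ => r end.
Definition concl (pi : proof) : A := rhead (root pi).

Inductive valid (P : program) : proof -> Prop :=
| valid_node r ss : P r -> map concl ss = rbody r -> Forall (valid P) ss ->
                    valid P (Node r ss).

Fixpoint height (pi : proof) : nat :=
  match pi with Node _ ss => S (list_max (map height ss)) end.

Inductive usedlab : proof -> L -> Prop :=
| ul_here r ss : usedlab (Node r ss) (rlab r)
| ul_sub r ss q l : In q ss -> usedlab q l -> usedlab (Node r ss) l.

Inductive pedge : proof -> L -> L -> Prop :=
| pe_here r ss q : In q ss -> pedge (Node r ss) (rlab (root q)) (rlab r)
| pe_sub r ss q x y : In q ss -> pedge q x y -> pedge (Node r ss) x y.

Definition proof_graph (pi : proof) : graph := star (usedlab pi) (pedge pi).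

End Causal.

(* The graph G of a proof ending in rule [l : p <- B_1, ..., B_n]
   contains the graph of every immediate subproof, so by induction, monotonicity of
   the iterates and down-closure, G lies in T_P^m(B_i) for all i, where m is the maximal
   subproof height.  Every vertex of G reaches the root label l, so G . l adds no edge to G;
   hence G lies in (T_P^m(B_1) * ... * T_P^m(B_n)) . l, the summand of T_P^(m+1)(p)
   contributed by the rule. *)
From Stdlib Require Import List Relations.
Set Implicit Arguments.

Section CausalGraphs.
Variable L : Type.

Lemma clos_trans_mono (E E' : L -> L -> Prop) x y :
  (forall a b, E a b -> E' a b) -> clos_trans L E x y -> clos_trans L E' x y.
Proof. intros HE C; induction C; [left; auto | eapply t_trans; eauto]. Qed.

Lemma clos_trans_ends (V : L -> Prop) (E : L -> L -> Prop) x y :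
  (forall a b, E a b -> V a /\ V b) -> clos_trans L E x y -> V x /\ V y.
Proof. intros HE C; induction C; [auto | tauto]. Qed.

Lemma star_cgraph (V : L -> Prop) (E : L -> L -> Prop) :
  (forall x y, E x y -> V x /\ V y) -> cgraph (star V E).
Proof.
  intros HE; split.
  - intros x y [[-> Hx] | C]; [split; left; auto |].
    destruct (clos_trans_ends V HE C); split; left; auto.
  - intros x y z [[-> Hy] | Cxy] [[-> Hz] | Cyz].
    + left; auto.
    + right; exact Cyz.
    + right; exact Cxy.
    + right; eapply t_trans; eauto.
Qed.

Lemma star_verts (V : L -> Prop) (E : L -> L -> Prop) x :
  (forall a b, E a b -> V a /\ V b) -> verts (star V E) x -> V x.
Proof. intros HE [[_ Hx] | C]; [auto | exact (proj1 (clos_trans_ends V HE C))]. Qed.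

Lemma gdot_glab_le (G : graph L) (l : L) :
  cgraph G -> G l l -> (forall x, verts G x -> G x l) -> gle G (gdot G (glab l)).
Proof.
  intros [_ Htrans] Hl Hroot x y [[-> [Hx | [-> _]]] | C]; auto.
  induction C as [a b [Hab | [[-> ->] | [Ha [-> _]]]] | a b c _ IHab _ IHbc]; eauto.
Qed.

Lemma vlab_glab (l : L) : vlab l (glab l).
Proof.
  split; [split |].
  - intros x y [-> ->]; unfold glab; auto.
  - intros x y z [-> ->] [_ ->]; unfold glab; auto.
  - exists (glab l); split; [tauto | intros x y; auto].
Qed.

Lemma vdot_vlab_intro (U : value L) (G : graph L) (l : L) :
  cgraph G -> U G -> G l l -> (forall x, verts G x -> G x l) -> vdot U (vlab l) G.
Proof.
  intros HG HU Hl Hroot; split; [exact HG |].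
  exists (gdot G (glab l)); split; [| exact (gdot_glab_le HG Hl Hroot)].
  exists G, (glab l); split; [exact HU | split; [apply vlab_glab | tauto]].
Qed.

End CausalGraphs.

Section ProofGraphs.
Variables L A : Type.

Lemma proof_ind_nested (Q : proof L A -> Prop) :
  (forall r ss, Forall Q ss -> Q (Node r ss)) -> forall pi, Q pi.
Proof.
  intros HQ; fix IH 1; intros [r ss]; apply HQ.
  induction ss as [| q ss IHss]; constructor; auto.
Qed.

Lemma height_subproof_le (q : proof L A) ss :
  In q ss -> height q <= list_max (map (@height L A) ss).
Proof.
  intros Hq.
  assert (Hmax := proj1 (list_max_le _ _) (le_n (list_max (map (@height L A) ss)))).
  rewrite Forall_forall in Hmax; apply Hmax, in_map, Hq.
Qed.

Lemma pedge_usedlab (pi : proof L A) x y :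
  pedge pi x y -> usedlab pi x /\ usedlab pi y.
Proof.
  induction 1 as [r ss q Hq | r ss q x y Hq _ [Hx Hy]].
  - split; [destruct q; eapply ul_sub; eauto; constructor | constructor].
  - split; eapply ul_sub; eauto.
Qed.

Lemma proof_graph_cgraph (pi : proof L A) : cgraph (proof_graph pi).
Proof. apply star_cgraph, pedge_usedlab. Qed.

Lemma proof_graph_subproof r ss (q : proof L A) :
  In q ss -> gle (proof_graph (Node r ss)) (proof_graph q).
Proof.
  intros Hq x y [[-> Hx] | C].
  - left; split; [reflexivity | eapply ul_sub; eauto].
  - right; eapply clos_trans_mono; [| exact C]; intros; eapply pe_sub; eauto.
Qed.

Lemma usedlab_reaches_root (pi : proof L A) x :
  usedlab pi x -> proof_graph pi x (rlab (root pi)).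
Proof.
  induction 1 as [r ss | r ss q x Hq _ IHq].
  - left; split; constructor.
  - apply (proj2 (proof_graph_cgraph (Node r ss))) with (rlab (root q)).
    + exact (proof_graph_subproof r ss Hq IHq).
    + right; left; constructor; exact Hq.
Qed.

Lemma proof_graph_verts_reach_root (pi : proof L A) x :
  verts (proof_graph pi) x -> proof_graph pi x (rlab (root pi)).
Proof.
  intros Hx; apply usedlab_reaches_root.
  eapply star_verts; [exact (@pedge_usedlab pi) | exact Hx].
Qed.

End ProofGraphs.

Section ImmediateConsequence.
Variables (L A : Type) (P : program L A).

Lemma TP_iter_down k p (G H : graph L) :
  TP_iter P k p H -> cgraph G -> gle G H -> TP_iter P k p G.
Proof.
  destruct k as [| k]; [intros [] |].
  intros [r [Pr [Hp [_ [G' [HG' HHG']]]]]] HG HGH.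
  exists r; split; [exact Pr | split; [exact Hp | split; [exact HG |]]].
  exists G'; split; [exact HG' | intros x y Hxy; auto].
Qed.

Lemma body_val_mono (I I' : interp L A) bs G :
  (forall p H, I p H -> I' p H) -> body_val I bs G -> body_val I' bs G.
Proof. intros HI; induction bs; simpl; [auto | intros []; split; auto]. Qed.

Lemma TP_mono (I I' : interp L A) p G :
  (forall p H, I p H -> I' p H) -> TP P I p G -> TP P I' p G.
Proof.
  intros HI [r [Pr [Hp [HG [G' [[G1 [G2 [HB [Hl HG']]]] Hle]]]]]].
  exists r; split; [exact Pr | split; [exact Hp | split; [exact HG |]]].
  exists G'; split; [| exact Hle].
  exists G1, G2; split; [eapply body_val_mono; eauto | auto].
Qed.

Lemma TP_iter_S k p G : TP_iter P k p G -> TP_iter P (S k) p G.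
Proof.
  revert p G; induction k as [| k IHk]; [intros p G [] |].
  intros p G; apply TP_mono, IHk.
Qed.

Lemma TP_iter_le k k' p G : k <= k' -> TP_iter P k p G -> TP_iter P k' p G.
Proof. induction 1; auto using TP_iter_S. Qed.

Lemma body_val_intro (I : interp L A) (G : graph L) (ss : list (proof L A)) :
  cgraph G -> (forall q, In q ss -> I (concl q) G) -> body_val I (map (@concl L A) ss) G.
Proof.
  intros HG; induction ss as [| q ss IHss]; simpl; intros HI.
  - split; [exact HG |].
    exists (fun _ _ => False); split; [intros x y F; exact F | intros x y []].
  - split; auto.
Qed.

End ImmediateConsequence.

Theorem mainTheorem19 (L A : Type) (P : program L A) :
  labels_distinct P ->
  forall pi : proof L A, valid P pi ->
  TP_iter P (height pi) (concl pi) (proof_graph pi).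
Proof.
  intros _ pi; induction pi as [r ss IH] using proof_ind_nested; intros Hv.
  inversion Hv as [? ? Pr Hbody Hvs]; subst.
  set (m := list_max (map (@height L A) ss)).
  set (G := proof_graph (Node r ss)).
  assert (HG : cgraph G) by apply proof_graph_cgraph.
  change (TP P (TP_iter P m) (rhead r) G).
  exists r; split; [exact Pr | split; [reflexivity |]].
  apply vdot_vlab_intro; [exact HG | | |].
  - rewrite <- Hbody; apply body_val_intro; [exact HG |].
    intros q Hq; apply TP_iter_le with (height q); [exact (height_subproof_le q ss Hq) |].
    apply TP_iter_down with (proof_graph q); [| exact HG | exact (proof_graph_subproof r ss Hq)].
    rewrite Forall_forall in IH, Hvs; auto.
  - left; split; constructor.
  - apply proof_graph_verts_reach_root.
Qed.
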